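(* Let $\{\chi^{(n)}_{n-j}\}_{1\le j\le n}$, $n\ge1$, be positive numbers, and let $\sigma_{\min}\in[0,2)$. Define $\mathsf a^{(n)}_0:=(2-\sigma_{\min})\chi^{(n)}_0$ and $\mathsf a^{(n)}_{n-j}:=\chi^{(n)}_{n-j}$ for $1\le j\le n-1$, and assume that for every $n\ge2$: (row decrease) $\mathsf a^{(n)}_{n-j-1}\ge\mathsf a^{(n)}_{n-j}>0$ for $1\le j\le n-1$; (column decrease) $\mathsf a^{(n-1)}_{n-1-j}\ge\mathsf a^{(n)}_{n-j}$ for $1\le j\le n-1$; (algebraic convexity) $\mathsf a^{(n-1)}_{n-2-j}-\mathsf a^{(n-1)}_{n-1-j}\ge\mathsf a^{(n)}_{n-1-j}-\mathsf a^{(n)}_{n-j}$ for $1\le j\le n-2$. For a real sequence $(w_k)_{k\ge1}$ and $n\ge1$ define $$Y_n:=\sum_{j=1}^{n-1}\big(\mathsf a^{(n)}_{n-j-1}-\mathsf a^{(n)}_{n-j}\big)\Big(\sum_{\ell=j+1}^n w_\ell\Big)^2+\mathsf a^{(n)}_{n-1}\Big(\sum_{\ell=1}^n w_\ell\Big)^2,\qquad Y_0:=0,$$ and for $n\ge2$ $$R_n:=\sum_{j=1}^{n-2}\big(\mathsf a^{(n-1)}_{n-2-j}-\mathsf a^{(n-1)}_{n-1-j}-\mathsf a^{(n)}_{n-j-1}+\mathsf a^{(n)}_{n-j}\big)\Big(\sum_{\ell=j+1}^{n-1}w_\ell\Big)^2+\big(\mathsf a^{(n-1)}_{n-2}-\mathsf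 a^{(n)}_{n-1}\big)\Big(\sum_{\ell=1}^{n-1}w_\ell\Big)^2,$$ $R_1:=0$. Then $Y_n\ge0$, $R_n\ge0$, $$2w_n\sum_{j=1}^n\chi^{(n)}_{n-j}w_j=Y_n-Y_{n-1}+\sigma_{\min}\chi^{(n)}_0w_n^2+R_n\qquad\text{for } n\ge1,$$ and consequently $$2\sum_{k=1}^n w_k\sum_{j=1}^k\chi^{(k)}_{k-j}w_j\ge Y_n+\sigma_{\min}\sum_{k=1}^n\chi^{(k)}_0w_k^2\qquad\text{for } n\ge1.$$ *)

From mathcomp Require Import all_boot all_order all_algebra.
Set Implicit Arguments. Unset Strict Implicit. Unset Printing Implicit Defensive.
Import Order.TTheory GRing.Theory Num.Theory.
Local Open Scope ring_scope.

(* chi n k  stands for  chi^{(n)}_k  (meaningful for n >= 1, 0 <= k <= n-1). *)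

Definition acoef (R : realFieldType) (sigma : R) (chi : nat -> nat -> R)
  (n k : nat) : R :=
  if k == 0%N then (2 - sigma) * chi n 0%N else chi n k.

Definition Yseq (R : realFieldType) (sigma : R) (chi : nat -> nat -> R)
  (w : nat -> R) (n : nat) : R :=
  if n == 0%N then 0 else
  \sum_(1 <= j < n)
     (acoef sigma chi n (n - j - 1) - acoef sigma chi n (n - j))
       * (\sum_(j.+1 <= l < n.+1) w l) ^+ 2
  + acoef sigma chi n (n - 1) * (\sum_(1 <= l < n.+1) w l) ^+ 2.

Definition Rseq (R : realFieldType) (sigma : R) (chi : nat -> nat -> R)
  (w : nat -> R) (n : nat) : R :=
  if (n <= 1)%N then 0 else
  \sum_(1 <= j < n.-1)
     (acoef sigma chi n.-1 (n - 2 - j) - acoef sigma chi n.-1 (n - 1 - j)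
      - acoef sigma chi n (n - j - 1) + acoef sigma chi n (n - j))
       * (\sum_(j.+1 <= l < n) w l) ^+ 2
  + (acoef sigma chi n.-1 (n - 2) - acoef sigma chi n (n - 1))
       * (\sum_(1 <= l < n) w l) ^+ 2.

From mathcomp Require Import all_boot all_order all_algebra.
From mathcomp Require Import zify ring lra.

(* With [b_j := a^(n)_(n-j)] and tail sums [T_j := w_j + ... + w_n], [Y_n] is
   the quadratic form [sum_(j<n) (b_(j+1) - b_j) T_(j+1)^2 + b_1 T_1^2], which
   is nonnegative when [b] is nondecreasing with [b_1 >= 0].  Summation by parts
   shows that appending [w_(n+1)] while keeping the coefficients raises the form
   by [2 w_(n+1) sum_j b_j w_j + b_(n+1) w_(n+1)^2]; since the form is linear in
   [b], replacing the coefficients of [Y_(n-1)] by those of step [n] costs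
   exactly [R_n], the same form with coefficients [b^(n-1) - b^(n)], which is
   nonnegative by column decrease and algebraic convexity.  Summing the
   one-step identities over [n] gives the final inequality. *)

Set Implicit Arguments.
Unset Strict Implicit.
Unset Printing Implicit Defensive.
Import Order.TTheory GRing.Theory Num.Theory.
Local Open Scope ring_scope.

Section TailForm.

Variable R : realFieldType.
Implicit Types b c w : nat -> R.

Definition tail_form b w n : R :=
  \sum_(1 <= j < n) (b j.+1 - b j) * (\sum_(j.+1 <= l < n.+1) w l) ^+ 2
  + b 1%N * (\sum_(1 <= l < n.+1) w l) ^+ 2.

Lemma tail_form0 b w : tail_form b w 0 = 0.
Proof. by rewrite /tail_form !big_geq // expr0n mulr0 addr0. Qed.

Lemma big_nat_recr0 (F : nat -> R) k n :
  F n = 0 -> \sum_(k <= i < n.+1) F i = \sum_(k <= i < n) F i.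
Proof.
move=> Fn0; have [le_kn | lt_nk] := leqP k n.
  by rewrite big_nat_recr //= Fn0 addr0.
by rewrite !big_geq // ltnW.
Qed.

Lemma summation_by_parts b w m :
  \sum_(1 <= j < m) (b j.+1 - b j) * (\sum_(j.+1 <= l < m.+1) w l)
  + b 1%N * (\sum_(1 <= l < m.+1) w l) = \sum_(1 <= j < m.+1) b j * w j.
Proof.
elim: m => [|m IH]; first by rewrite !big_geq // mulr0 addr0.
under eq_big_nat => j /andP[_ lt_jm] do rewrite big_nat_recr // mulrDr.
rewrite big_split /= -mulr_suml telescope_sumr // big_nat_recr0; last first.
  by rewrite big_geq // mulr0.
rewrite [\sum_(1 <= l < m.+2) w l]big_nat_recr // [RHS]big_nat_recr //= -IH.
ring.
Qed.

Lemma tail_formS b w m :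
  tail_form b w m.+1 - tail_form b w m
  = 2 * w m.+1 * \sum_(1 <= j < m.+1) b j * w j + b m.+1 * w m.+1 ^+ 2.
Proof.
rewrite /tail_form.
have expand_sq j : (j < m.+1)%N ->
    (b j.+1 - b j) * (\sum_(j.+1 <= l < m.+2) w l) ^+ 2
    = (b j.+1 - b j) * (\sum_(j.+1 <= l < m.+1) w l) ^+ 2
      + 2 * w m.+1 * ((b j.+1 - b j) * \sum_(j.+1 <= l < m.+1) w l)
      + w m.+1 ^+ 2 * (b j.+1 - b j).
  by move=> lt_jm; rewrite big_nat_recr //=; ring.
under eq_big_nat => j /andP[_ lt_jm] do rewrite expand_sq //.
rewrite !big_split /= -!mulr_sumr telescope_sumr //.
rewrite [\sum_(1 <= j < m.+1) _ * _ ^+ 2]big_nat_recr0; last first.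
  by rewrite big_geq // expr0n mulr0.
rewrite [\sum_(1 <= j < m.+1) (_ - _) * _]big_nat_recr0; last first.
  by rewrite big_geq // mulr0.
rewrite -summation_by_parts.
rewrite [\sum_(1 <= l < m.+2) w l]big_nat_recr //=.
ring.
Qed.

Lemma tail_formB b c w n :
  tail_form (fun j => b j - c j) w n = tail_form b w n - tail_form c w n.
Proof.
rewrite /tail_form.
rewrite (eq_bigr (fun j => (b j.+1 - b j) * (\sum_(j.+1 <= l < n.+1) w l) ^+ 2
                          - (c j.+1 - c j) * (\sum_(j.+1 <= l < n.+1) w l) ^+ 2)).
  by rewrite sumrB; ring.
by move=> j _; ring.
Qed.

Lemma tail_form_ge0 b w n :
  {in [pred j | 1 <= j < n]%N, forall j, b j <= b j.+1} -> 0 <= b 1%N ->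
  0 <= tail_form b w n.
Proof.
move=> b_incr b1_ge0; apply: addr_ge0; last by rewrite mulr_ge0 ?sqr_ge0.
rewrite big_nat_cond; apply: sumr_ge0 => j /andP[j_range _].
by rewrite mulr_ge0 ?sqr_ge0 // subr_ge0 b_incr.
Qed.

End TailForm.

Definition acoef_rev (R : realFieldType) (sigma : R) (chi : nat -> nat -> R)
  (n j : nat) : R :=
  acoef sigma chi n (n - j).

Section EnergyIdentity.

Variables (R : realFieldType) (sigma : R) (chi : nat -> nat -> R) (w : nat -> R).
Local Notation b := (acoef_rev sigma chi).
Local Notation Y := (Yseq sigma chi w).
Local Notation Rem := (Rseq sigma chi w).

Lemma Yseq_tail_form n : Y n = tail_form (b n) w n.
Proof.
case: n => [|n]; first by rewrite tail_form0.
rewrite /Yseq /tail_form /=.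
by congr (_ + _); apply: eq_big_nat => j _; rewrite /acoef_rev -subnDA addn1.
Qed.

Lemma Rseq_tail_form n : Rem n.+1 = tail_form (fun j => b n j - b n.+1 j) w n.
Proof.
case: n => [|n]; first by rewrite tail_form0.
rewrite /Rseq /tail_form /acoef_rev /=.
have -> : (n.+2 - 2 = n.+1 - 1)%N by lia.
congr (_ + _); apply: eq_big_nat => j /andP[_ lt_jn].
have -> : (n.+2 - 2 - j = n.+1 - j.+1)%N by lia.
have -> : (n.+2 - 1 - j = n.+1 - j)%N by lia.
rewrite -subnDA addn1; ring.
Qed.

Lemma Yseq_step n :
  2 * w n.+1 * (\sum_(1 <= j < n.+2) chi n.+1 (n.+1 - j)%N * w j)
  = Y n.+1 - Y n + sigma * chi n.+1 0%N * w n.+1 ^+ 2 + Rem n.+1.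
Proof.
have -> : Y n.+1 - Y n + sigma * chi n.+1 0%N * w n.+1 ^+ 2 + Rem n.+1
    = tail_form (b n.+1) w n.+1 - tail_form (b n.+1) w n
      + sigma * chi n.+1 0%N * w n.+1 ^+ 2.
  by rewrite !Yseq_tail_form Rseq_tail_form tail_formB; ring.
have chi_rev : \sum_(1 <= j < n.+1) chi n.+1 (n.+1 - j)%N * w j
    = \sum_(1 <= j < n.+1) b n.+1 j * w j.
  by apply: eq_big_nat => j /andP[_ lt_jn]; rewrite /acoef_rev /acoef subn_eq0 leqNgt lt_jn.
rewrite tail_formS big_nat_recr //= chi_rev /acoef_rev /acoef subnn /=; ring.
Qed.

Lemma Yseq_telescope n :
  2 * (\sum_(1 <= k < n.+1) w k * (\sum_(1 <= j < k.+1) chi k (k - j)%N * w j))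
  = Y n + sigma * (\sum_(1 <= k < n.+1) chi k 0%N * w k ^+ 2)
    + \sum_(1 <= k < n.+1) Rem k.
Proof.
elim: n => [|n IH]; first by rewrite !big_geq // /Yseq /=; ring.
rewrite [in LHS]big_nat_recr //= mulrDr IH mulrA Yseq_step.
rewrite ![in RHS](big_nat_recr n.+1) //=; ring.
Qed.

End EnergyIdentity.

Section Nonnegativity.

Variables (R : realFieldType) (sigma : R) (chi : nat -> nat -> R) (w : nat -> R).
Local Notation a := (acoef sigma chi).

Lemma Yseq_ge0 (chi1_pos : 0 < chi 1%N 0%N) (sigma_lt2 : sigma < 2)
  (row_dec : forall n j, (2 <= n)%N -> (1 <= j <= n - 1)%N ->
     a n (n - j - 1)%N >= a n (n - j)%N /\ a n (n - j)%N > 0) n :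
  0 <= Yseq sigma chi w n.
Proof.
rewrite Yseq_tail_form.
case: n => [|[|n]]; first by rewrite tail_form0.
  apply: tail_form_ge0 => [j /[!inE] j_range|]; first by exfalso; lia.
  by rewrite /acoef_rev /acoef /= mulr_ge0 ?subr_ge0 ?ltW.
apply: tail_form_ge0 => [j /[!inE] j_range|]; rewrite /acoef_rev.
  by have [] := row_dec n.+2 j isT ltac:(lia); rewrite -subnDA addn1.
by have [_ /ltW] := row_dec n.+2 1%N isT isT.
Qed.

Lemma Rseq_ge0
  (col_dec : forall n j, (2 <= n)%N -> (1 <= j <= n - 1)%N ->
     a (n - 1)%N (n - 1 - j)%N >= a n (n - j)%N)
  (alg_conv : forall n j, (2 <= n)%N -> (1 <= j <= n - 2)%N ->
     a (n - 1)%N (n - 2 - j)%N - a (n - 1)%N (n - 1 - j)%N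
     >= a n (n - 1 - j)%N - a n (n - j)%N) n :
  0 <= Rseq sigma chi w n.
Proof.
case: n => [|[|n]]; first by rewrite /Rseq.
  by rewrite Rseq_tail_form tail_form0.
rewrite Rseq_tail_form.
apply: tail_form_ge0 => [j /[!inE] j_range|]; rewrite /acoef_rev.
  have := alg_conv n.+2 j isT ltac:(lia).
  have -> : (n.+2 - 1 = n.+1)%N by lia.
  have -> : (n.+2 - 2 - j = n.+1 - j.+1)%N by lia.
  rewrite subSS; lra.
have := col_dec n.+2 1%N isT isT.
have -> : (n.+2 - 1 = n.+1)%N by lia.
by rewrite subr_ge0.
Qed.

End Nonnegativity.

Theorem lemma2p3 (R : realFieldType) (chi : nat -> nat -> R) (sigma : R)
  (w : nat -> R)
  (chi_pos : forall n j, (1 <= j <= n)%N -> 0 < chi n (n - j)%N)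
  (sigma_ge0 : 0 <= sigma) (sigma_lt2 : sigma < 2)
  (row_dec : forall n j, (2 <= n)%N -> (1 <= j <= n - 1)%N ->
     acoef sigma chi n (n - j - 1)%N >= acoef sigma chi n (n - j)%N /\
     acoef sigma chi n (n - j)%N > 0)
  (col_dec : forall n j, (2 <= n)%N -> (1 <= j <= n - 1)%N ->
     acoef sigma chi (n - 1)%N (n - 1 - j)%N >= acoef sigma chi n (n - j)%N)
  (alg_conv : forall n j, (2 <= n)%N -> (1 <= j <= n - 2)%N ->
     acoef sigma chi (n - 1)%N (n - 2 - j)%N - acoef sigma chi (n - 1)%N (n - 1 - j)%N
     >= acoef sigma chi n (n - 1 - j)%N - acoef sigma chi n (n - j)%N) :
  forall n : nat, (1 <= n)%N ->
    [/\ 0 <= Yseq sigma chi w n,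
        0 <= Rseq sigma chi w n,
        2 * w n * (\sum_(1 <= j < n.+1) chi n (n - j)%N * w j)
          = Yseq sigma chi w n - Yseq sigma chi w n.-1
            + sigma * chi n 0%N * w n ^+ 2 + Rseq sigma chi w n
      & 2 * (\sum_(1 <= k < n.+1) w k * (\sum_(1 <= j < k.+1) chi k (k - j)%N * w j))
          >= Yseq sigma chi w n + sigma * (\sum_(1 <= k < n.+1) chi k 0%N * w k ^+ 2)].
Proof.
have chi1_pos : 0 < chi 1%N 0%N := chi_pos 1%N 1%N isT.
have Rseq_nonneg := Rseq_ge0 w col_dec alg_conv.
move=> [//|n] _; split.
- exact: (Yseq_ge0 w chi1_pos sigma_lt2 row_dec).
- exact: Rseq_nonneg.
- exact: Yseq_step.
- by rewrite (Yseq_telescope sigma) lerDl sumr_ge0.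
Qed.
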